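(* Let $(E,\tau)$ be a locally solid vector lattice. Then $\tau$ is locally solidly submetrisable if and only if $C_\tau=E$.
   Context: All vector lattices are real and Archimedean; linear topologies are Hausdorff. A locally solid topology on a vector lattice is a linear topology such that zero has a neighbourhood basis of solid sets. A locally solid topology on a vector lattice $G$ is solidly submetrisable if it is finer than some metrisable locally solid topology on $G$. $\tau$ is locally solidly submetrisable if for every $x\in E$ the restriction $\tau|_{B_x}$ to the band $B_x$ generated by $x$ is solidly submetrisable. A sequence $(V_n)_{n\geq1}$ of $\tau$-neighbourhoods of zero is normal if $V_{n+1}+V_{n+1}\subseteq V_n$ for all $n$. The carrier of $\tau$ is $C_\tau=\bigcup\{N^{\mathrm d}: N=\bigcap_{n\geq1}V_n \text{ for some normal sequence }(V_n)\text{ of solid }\tau\text{-neighbourhoods of zero}\}$, where $N^{\mathrm d}$ is the disjoint complement of $N$ in $E$. *)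

From HB Require Import structures.
From mathcomp Require Import all_boot all_order all_algebra.
From mathcomp Require Import all_classical all_reals.
Set Implicit Arguments. Unset Strict Implicit. Unset Printing Implicit Defensive.
Import Order.TTheory GRing.Theory Num.Theory.
Local Open Scope classical_set_scope.
Local Open Scope ring_scope.

Section VectorLattice.
Variables (R : realType) (E : lmodType R) (le : E -> E -> Prop).

Definition is_sup2 (x y s : E) : Prop :=
  le x s /\ le y s /\ forall u, le x u -> le y u -> le s u.
Definition is_inf2 (x y s : E) : Prop :=
  le s x /\ le s y /\ forall u, le u x -> le u y -> le u s.

Definition is_vector_lattice : Prop :=
  (forall x, le x x) /\
  (forall x y, le x y -> le y x -> x = y) /\
  (forall x y z, le x y -> le y z -> le x z) /\
  (forall x y z, le x y -> le (x + z) (y + z)) /\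
  (forall (a : R) x y, 0 <= a -> le x y -> le (a *: x) (a *: y)) /\
  (forall x y, exists s, is_sup2 x y s).

Definition is_archimedean : Prop :=
  forall x y : E, (forall n : nat, le (n%:R *: x) y) -> le x 0.

Definition vjoin (x y : E) : E := xget x [set s | is_sup2 x y s].
Definition vmeet (x y : E) : E := xget x [set s | is_inf2 x y s].
Definition vabs (x : E) : E := vjoin x (- x).

Definition solid_in (G S : set E) : Prop :=
  S `<=` G /\ forall x y, S y -> G x -> le (vabs x) (vabs y) -> S x.

Definition is_ideal (B : set E) : Prop :=
  [/\ B 0, (forall x y, B x -> B y -> B (x + y)),
      (forall (a : R) x, B x -> B (a *: x)) & solid_in setT B].

Definition is_supset (D : set E) (s : E) : Prop :=
  (forall d, D d -> le d s) /\ (forall u, (forall d, D d -> le d u) -> le s u).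

Definition is_band (B : set E) : Prop :=
  is_ideal B /\ forall D s, D `<=` B -> is_supset D s -> B s.

Definition band_gen (x : E) : set E :=
  [set y | forall B, is_band B -> B x -> B y].

Definition disj_compl (N : set E) : set E :=
  [set x | forall y, N y -> vmeet (vabs x) (vabs y) = 0].

Definition is_topology_on (G : set E) (T : set (set E)) : Prop :=
  [/\ (forall U, T U -> U `<=` G), T G,
      (forall F : set (set E), F `<=` T -> T (\bigcup_(U in F) U)) &
      (forall U V, T U -> T V -> T (U `&` V))].

(* Hausdorff linear topology on the vector subspace G *)
Definition linear_topology_on (G : set E) (T : set (set E)) : Prop :=
  [/\ is_topology_on G T,
      (forall x y U, G x -> G y -> T U -> U (x + y) ->
         exists V W, [/\ T V, T W, V x, W y &
           forall v w, V v -> W w -> U (v + w)]),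
      (forall (a : R) x U, G x -> T U -> U (a *: x) ->
         exists e : R, exists V, [/\ 0 < e, T V, V x &
           forall (b : R) v, `|b - a| < e -> V v -> U (b *: v)]) &
      (forall x y, G x -> G y -> x <> y ->
         exists U V, [/\ T U, T V, U x, V y & U `&` V = set0])].

Definition nbhd0 (T : set (set E)) (U : set E) : Prop :=
  exists V, [/\ T V, V 0 & V `<=` U].

Definition locally_solid_on (G : set E) (T : set (set E)) : Prop :=
  linear_topology_on G T /\
  forall U, nbhd0 T U -> exists V, [/\ nbhd0 T V, solid_in G V & V `<=` U].

Definition is_metric_on (G : set E) (d : E -> E -> R) : Prop :=
  [/\ (forall x y, G x -> G y -> 0 <= d x y),
      (forall x y, G x -> G y -> (d x y = 0 <-> x = y)),
      (forall x y, G x -> G y -> d x y = d y x) &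
      (forall x y z, G x -> G y -> G z -> d x z <= d x y + d y z)].

Definition metrisable_on (G : set E) (T : set (set E)) : Prop :=
  exists d : E -> E -> R, is_metric_on G d /\
    forall U, T U <-> (U `<=` G /\
      forall x, U x -> exists r : R, 0 < r /\
        forall y, G y -> d x y < r -> U y).

Definition finer (T T' : set (set E)) : Prop := T' `<=` T.

Definition solidly_submetrisable_on (G : set E) (T : set (set E)) : Prop :=
  exists T', [/\ locally_solid_on G T', metrisable_on G T' & finer T T'].

Definition restrict_top (B : set E) (T : set (set E)) : set (set E) :=
  [set V | exists U, T U /\ V = U `&` B].

Definition locally_solidly_submetrisable (T : set (set E)) : Prop :=
  forall x : E, solidly_submetrisable_on (band_gen x) (restrict_top (band_gen x) T).

Definition normal_seq (T : set (set E)) (V : nat -> set E) : Prop :=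
  (forall n, nbhd0 T (V n)) /\
  (forall n a b, V n.+1 a -> V n.+1 b -> V n (a + b)).

Definition carrier (T : set (set E)) : set E :=
  [set x | exists V : nat -> set E,
     [/\ normal_seq T V, (forall n, solid_in setT (V n)) &
         disj_compl (\bigcap_n V n) x]].

End VectorLattice.

From HB Require Import structures.
From mathcomp Require Import all_boot all_order all_algebra.
From mathcomp Require Import all_classical all_reals.
From mathcomp Require Import ring lra zify.
Set Implicit Arguments. Unset Strict Implicit. Unset Printing Implicit Defensive.
Import Order.TTheory GRing.Theory Num.Theory.
Local Open Scope classical_set_scope.
Local Open Scope ring_scope.

(* Write [N = \bigcap_n V_n] for a normal sequence of solid neighbourhoods [V_n]
   and [B_x] for the band generated by [x].

   If [d] is a metric on [B_x] whose topology is coarser than [tau] on [B_x], the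
   [d]-balls of radius [2^-n] around [0] are traces on [B_x] of [tau]-open sets
   [U_n], and a normal sequence of solid neighbourhoods can be chosen with
   [V_n <= U_n].  For [y] in [N], the element [|x| /\ |y|] lies in [B_x] and in
   every ball, so it is [0]: [x] is in [N^d].

   Conversely, if [x] is in [N^d], put [W_0 = E], [W_(k+1) = V_k] and
   [rho z = inf {sum_i 2^-k_i | z = sum_i a_i, a_i in W_(k_i)}] (Birkhoff-Kakutani).
   By binary carrying, [rho z < 2^-k] forces [z] into [W_k], so [rho] is an
   F-seminorm whose small balls are squeezed between the solid sets [V_n].  It is
   definite on [B_x] since [B_x <= N^d] and [N^d] meets [N] only in [0], hence it
   defines a metrisable locally solid topology on [B_x] coarser than [tau]. *)

Section VectorLatticeTheory.
Variables (R : realType) (E : lmodType R) (le : E -> E -> Prop).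
Hypothesis hVL : is_vector_lattice le.

Lemma vle_refl x : le x x. Proof. by case: hVL => h _; apply: h. Qed.

Lemma vle_anti x y : le x y -> le y x -> x = y.
Proof. by case: hVL => _ [h _]; apply: h. Qed.

Lemma vle_trans x y z : le x y -> le y z -> le x z.
Proof. by case: hVL => _ [_ [h _]]; apply: h. Qed.

Lemma vlerD2r x y z : le x y -> le (x + z) (y + z).
Proof. by case: hVL => _ [_ [_ [h _]]]; apply: h. Qed.

Lemma vlerZ2l (a : R) x y : 0 <= a -> le x y -> le (a *: x) (a *: y).
Proof. by case: hVL => _ [_ [_ [_ [h _]]]]; apply: h. Qed.

Lemma vlerD2l x y z : le x y -> le (z + x) (z + y).
Proof. by move=> h; rewrite ![z + _]addrC; apply: vlerD2r. Qed.

Lemma vlerD a b c d : le a b -> le c d -> le (a + c) (b + d).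
Proof. by move=> h1 h2; apply: vle_trans (vlerD2r c h1) (vlerD2l b h2). Qed.

Lemma vlerBrDr x y z : le x (y - z) <-> le (x + z) y.
Proof.
by split=> [/(vlerD2r z)|/(vlerD2r (- z))]; rewrite ?subrK ?addrK.
Qed.

Lemma vlerBlDr x y z : le (x - z) y <-> le x (y + z).
Proof.
by split=> [/(vlerD2r z)|/(vlerD2r (- z))]; rewrite ?subrK ?addrK.
Qed.

Lemma vsubr_ge0 x y : le 0 (y - x) <-> le x y.
Proof. by rewrite vlerBrDr add0r. Qed.

Lemma vlerN2 x y : le x y -> le (- y) (- x).
Proof.
by move=> h; apply/vsubr_ge0; rewrite opprK addrC; apply/vsubr_ge0.
Qed.

Lemma vaddr_ge0 u v : le 0 u -> le 0 v -> le 0 (u + v).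
Proof. by move=> hu hv; rewrite -[0]addr0; apply: vlerD. Qed.

Lemma vmulrn_ge0 u m : le 0 u -> le 0 (u *+ m).
Proof.
move=> hu; elim: m => [|m ih]; first by rewrite mulr0n; apply: vle_refl.
by rewrite mulrS; apply: vaddr_ge0.
Qed.

Lemma join_spec x y : is_sup2 le x y (vjoin le x y).
Proof. by apply: xgetPex; case: hVL => _ [_ [_ [_ [_ h]]]]; apply: h. Qed.

Lemma join_ubl x y : le x (vjoin le x y). Proof. by case: (join_spec x y). Qed.
Lemma join_ubr x y : le y (vjoin le x y). Proof. by case: (join_spec x y) => _ []. Qed.

Lemma join_lub x y u : le x u -> le y u -> le (vjoin le x y) u.
Proof. by case: (join_spec x y) => _ [_]; apply. Qed.

(* Infima exist because [inf(x, y) = - sup(- x, - y)]. *)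
Lemma meet_spec x y : is_inf2 le x y (vmeet le x y).
Proof.
apply: xgetPex; exists (- vjoin le (- x) (- y)); split; [|split].
- by rewrite -[x in le _ x]opprK; apply/vlerN2/join_ubl.
- by rewrite -[y in le _ y]opprK; apply/vlerN2/join_ubr.
- move=> u hx hy; rewrite -[u]opprK; apply/vlerN2/join_lub; exact: vlerN2.
Qed.

Lemma meet_lbl x y : le (vmeet le x y) x. Proof. by case: (meet_spec x y). Qed.
Lemma meet_lbr x y : le (vmeet le x y) y. Proof. by case: (meet_spec x y) => _ []. Qed.

Lemma meet_glb x y u : le u x -> le u y -> le u (vmeet le x y).
Proof. by case: (meet_spec x y) => _ [_]; apply. Qed.

Lemma meet_addr_join a b : vmeet le a b = a + b - vjoin le a b.
Proof.
apply: vle_anti.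
- apply/vlerBrDr; rewrite addrC; apply/vlerBrDr/join_lub; apply/vlerBrDr.
    by apply: vlerD2l; apply: meet_lbr.
  by rewrite [a + b]addrC; apply: vlerD2l; apply: meet_lbl.
- apply: meet_glb; apply/vsubr_ge0.
    have -> : a - (a + b - vjoin le a b) = vjoin le a b - b.
      by rewrite opprB opprD addrCA addNKr.
    by apply/vsubr_ge0/join_ubr.
  have -> : b - (a + b - vjoin le a b) = vjoin le a b - a.
    by rewrite opprB opprD addrCA [b + _]addrC subrK.
  by apply/vsubr_ge0/join_ubl.
Qed.

Lemma vabs_ge x : le x (vabs le x). Proof. exact: join_ubl. Qed.
Lemma vabs_geN x : le (- x) (vabs le x). Proof. exact: join_ubr. Qed.

Lemma vabs_lub x u : le x u -> le (- x) u -> le (vabs le x) u.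
Proof. exact: join_lub. Qed.

Lemma vabs_ge0 x : le 0 (vabs le x).
Proof.
have h2 : le 0 (vabs le x *+ 2).
  by rewrite mulr2n -(subrr x); apply: vlerD; [apply: vabs_ge | apply: vabs_geN].
have := vlerZ2l (a := 2^-1) _ h2; rewrite scaler0 -scaler_nat scalerA mulVf.
  by rewrite scale1r; apply; rewrite invr_ge0 ler0n.
by rewrite pnatr_eq0.
Qed.

Lemma vabs_le_id z : le 0 z -> le (vabs le z) z.
Proof.
move=> hz; apply: vabs_lub; first exact: vle_refl.
by apply: (vle_trans _ hz); rewrite -oppr0; apply: vlerN2.
Qed.

Lemma vabs_le0 z : le (vabs le z) 0 -> z = 0.
Proof.
move=> h; apply: vle_anti; first exact: vle_trans (vabs_ge z) h.
by rewrite -[z]opprK -oppr0; apply/vlerN2/(vle_trans (vabs_geN z) h).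
Qed.

Lemma vabsD_le x y : le (vabs le (x + y)) (vabs le x + vabs le y).
Proof.
apply: vabs_lub; first by apply: vlerD; apply: vabs_ge.
by rewrite opprD; apply: vlerD; apply: vabs_geN.
Qed.

Lemma vabsZ_le (c : R) x : le (vabs le (c *: x)) (`|c| *: vabs le x).
Proof.
have [hc|hc] := lerP 0 c.
  rewrite ger0_norm //; apply: vabs_lub; rewrite -?scalerN; apply: vlerZ2l => //.
    exact: vabs_ge.
  exact: vabs_geN.
have hc' : 0 <= - c by rewrite oppr_ge0 ltW.
rewrite ltr0_norm //; apply: vabs_lub.
  by rewrite -[c *: x]opprK -scaleNr -scalerN; apply: vlerZ2l hc' (vabs_geN x).
by rewrite -scaleNr; apply: vlerZ2l hc' (vabs_ge x).
Qed.

Lemma scale_norm_le_muln (c : R) (m : nat) v :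
  le 0 v -> `|c| <= m%:R -> le (`|c| *: v) (v *+ m).
Proof.
move=> hv hc; rewrite -scaler_nat; apply/vsubr_ge0; rewrite -scalerBl.
by rewrite -(scaler0 _ (m%:R - `|c|)); apply: vlerZ2l; rewrite ?subr_ge0.
Qed.

Lemma vabsZ_le1 (c : R) x : `|c| <= 1 -> le (vabs le (c *: x)) (vabs le x).
Proof.
move=> hc; apply: vle_trans (vabsZ_le c x) _.
by have := scale_norm_le_muln (vabs_ge0 x) (m := 1) hc; rewrite mulr1n.
Qed.

Lemma meet_le0_eq0 u w : le 0 u -> le 0 w -> le (vmeet le u w) 0 -> vmeet le u w = 0.
Proof. by move=> hu hw h; apply: vle_anti h (meet_glb hu hw). Qed.

Lemma meet0_le u v w : le 0 u -> le 0 w -> le u v ->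
  vmeet le v w = 0 -> vmeet le u w = 0.
Proof.
move=> hu hw huv hv; apply: meet_le0_eq0 => //; rewrite -hv.
by apply: meet_glb; [apply: vle_trans huv | apply: meet_lbr]; apply: meet_lbl.
Qed.

Lemma meet0D u v w : le 0 u -> le 0 v -> le 0 w ->
  vmeet le u w = 0 -> vmeet le v w = 0 -> vmeet le (u + v) w = 0.
Proof.
move=> hu hv hw h1 h2; apply: meet_le0_eq0 => //; first exact: vaddr_ge0.
set t := vmeet le (u + v) w.
have htu : le (t - v) u by apply/vlerBlDr/meet_lbl.
have htw : le (t - v) w.
  apply: vle_trans (meet_lbr (u + v) w); apply/vsubr_ge0.
  by rewrite opprB addrC subrK.
have htv : le t v by have := meet_glb htu htw; rewrite h1 => /vlerBlDr; rewrite add0r.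
by rewrite -h2; apply: meet_glb => //; apply: meet_lbr.
Qed.

Lemma meet0Mn u w m : le 0 u -> le 0 w -> vmeet le u w = 0 -> vmeet le (u *+ m) w = 0.
Proof.
move=> hu hw h; elim: m => [|m ih].
  by rewrite mulr0n; apply: meet_le0_eq0 (vle_refl 0) hw (meet_lbl _ _).
by rewrite mulrS; apply: meet0D => //; apply: vmulrn_ge0.
Qed.

Lemma meet0_sup (D : set E) s w d0 : D d0 -> le 0 w ->
  (forall d, D d -> le 0 d /\ vmeet le d w = 0) -> is_supset le D s ->
  vmeet le s w = 0.
Proof.
move=> Dd0 hw hD [hub hlub].
have hs0 : le 0 s by apply: vle_trans (hub _ Dd0); case: (hD _ Dd0).
apply: meet_le0_eq0 => //; rewrite meet_addr_join; apply/vlerBlDr; rewrite add0r.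
apply/vlerBrDr/hlub => d Dd; apply/vlerBrDr.
have [hd0 /eqP] := hD d Dd; rewrite meet_addr_join subr_eq0 => /eqP ->.
by apply: join_lub; [apply: vle_trans (hub _ Dd) (join_ubl _ _) | apply: join_ubr].
Qed.

Lemma vabs_le_posD x : le (vabs le x) (vjoin le x 0 + vjoin le (- x) 0).
Proof.
apply: vabs_lub.
  by have := vlerD (join_ubl x 0) (join_ubr (- x) 0); rewrite addr0.
by have := vlerD (join_ubr x 0) (join_ubl (- x) 0); rewrite add0r.
Qed.

Lemma disj_compl_solid N x x' : disj_compl le N x' ->
  le (vabs le x) (vabs le x') -> disj_compl le N x.
Proof. by move=> hx' hle y Ny; apply: meet0_le (vabs_ge0 _) (vabs_ge0 y) hle (hx' y Ny). Qed.

Lemma disj_compl0 N : disj_compl le N 0.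
Proof.
move=> y _; apply: meet0_le (vabs_ge0 0) (vabs_ge0 y) (vabs_le_id (vle_refl 0)) _.
exact: meet_le0_eq0 (vle_refl 0) (vabs_ge0 y) (meet_lbl _ _).
Qed.

Lemma disj_compl_ideal N : is_ideal le (disj_compl le N).
Proof.
split; first exact: disj_compl0.
- move=> x x' hx hx' y Ny; apply: meet0_le (vabs_ge0 _) (vabs_ge0 y) (vabsD_le x x') _.
  exact: meet0D (vabs_ge0 _) (vabs_ge0 _) (vabs_ge0 _) (hx y Ny) (hx' y Ny).
- move=> a x hx; have [m hm] : exists m : nat, `|a| <= m%:R.
    by exists (Num.bound `|a|); apply/ltW/archi_boundP.
  apply: (@disj_compl_solid _ _ (vabs le x *+ m)) => [y Ny|].
    apply: meet0_le (vabs_ge0 _) (vabs_ge0 y) (vabs_le_id (vmulrn_ge0 m (vabs_ge0 x))) _.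
    by apply: meet0Mn (vabs_ge0 _) (vabs_ge0 _) (hx y Ny).
  apply: vle_trans (vabsZ_le a x) _; apply: vle_trans (vabs_ge _).
  exact: scale_norm_le_muln (vabs_ge0 x) hm.
- by split=> // x x' hx' _; apply: disj_compl_solid.
Qed.

(* An empty [D] has supremum [0]; otherwise [|s| <= sup (d \/ 0) + (- s) \/ 0], the
   first summand being a supremum of elements of [N^d] and the second below [|d0|]. *)
Lemma disj_compl_sup_closed N D s :
  D `<=` disj_compl le N -> is_supset le D s -> disj_compl le N s.
Proof.
move=> hD [hub hlub].
have [[d0 Dd0]|D0] := pselect (exists d, D d); last first.
  have hs u : le s u by apply: hlub => d Dd; case: D0; exists d.
  suff -> : s = 0 by apply: disj_compl0.
  by apply: vle_anti (hs 0) _; have /vsubr_ge0 := hs (s + s); rewrite addrK.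
apply: (disj_compl_solid (x' := vjoin le s 0 + vjoin le (- s) 0)); last first.
  exact: vle_trans (vabs_le_posD s) (vabs_ge _).
move=> y Ny; apply: meet0_le (vabs_ge0 _) (vabs_ge0 y) (vabs_le_id _) _.
  by apply: vaddr_ge0; apply: join_ubr.
apply: meet0D (join_ubr _ _) (join_ubr _ _) (vabs_ge0 y) _ _.
- apply: (meet0_sup (D := [set vjoin le d 0 | d in D]) (d0 := vjoin le d0 0)).
  + by exists d0.
  + exact: vabs_ge0.
  + move=> _ [d Dd <-]; split; first exact: join_ubr.
    apply: meet0_le (join_ubr _ _) (vabs_ge0 y) _ (hD _ Dd y Ny).
    by apply: join_lub; [apply: vabs_ge | apply: vabs_ge0].
  + split=> [_ [d Dd <-]|u hu].
      by apply: join_lub (join_ubr _ _); apply: vle_trans (hub _ Dd) (join_ubl _ _).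
    apply: join_lub; first apply: hlub => d Dd.
      exact: vle_trans (join_ubl _ _) (hu _ (ex_intro2 _ _ d Dd erefl)).
    exact: vle_trans (join_ubr _ _) (hu _ (ex_intro2 _ _ d0 Dd0 erefl)).
- apply: meet0_le (join_ubr _ _) (vabs_ge0 y) _ (hD _ Dd0 y Ny).
  by apply: join_lub (vabs_ge0 _); apply: vle_trans (vlerN2 (hub _ Dd0)) (vabs_geN _).
Qed.

Lemma disj_compl_band N : is_band le (disj_compl le N).
Proof. by split; [apply: disj_compl_ideal | apply: disj_compl_sup_closed]. Qed.

End VectorLatticeTheory.

Section BandGen.
Variables (R : realType) (E : lmodType R) (le : E -> E -> Prop) (x : E).

Lemma band_gen_id : band_gen le x x.
Proof. by move=> B _. Qed.

Lemma band_gen_sub B : is_band le B -> B x -> band_gen le x `<=` B.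
Proof. by move=> hB hx y; apply. Qed.

Lemma band_gen0 : band_gen le x 0.
Proof. by move=> B [[]]. Qed.

Lemma band_genD a b : band_gen le x a -> band_gen le x b -> band_gen le x (a + b).
Proof.
by move=> ha hb B hB hx; case: (hB) => -[_ hD _ _] _; apply: hD; [apply: ha | apply: hb].
Qed.

Lemma band_genZ (c : R) a : band_gen le x a -> band_gen le x (c *: a).
Proof. by move=> ha B hB hx; case: (hB) => -[_ _ hZ _] _; apply: hZ; apply: ha. Qed.

Lemma band_gen_solid a b : band_gen le x a -> le (vabs le b) (vabs le a) -> band_gen le x b.
Proof.
by move=> ha hba B hB hx; case: (hB) => -[_ _ _ [_ hs]] _; apply: hs (ha B hB hx) I hba.
Qed.

End BandGen.

Lemma pow_half_lt (R : realType) (e : R) : 0 < e -> exists n : nat, (2^-1 : R) ^+ n < e.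
Proof.
move=> he; exists (Num.bound e^-1).+1; set m := (Num.bound e^-1).+1.
have h1 : e^-1 < m%:R.
  have he' : 0 <= e^-1 by rewrite invr_ge0 ltW.
  by apply: lt_le_trans (archi_boundP he') _; rewrite ler_nat.
have h2 : (m%:R : R) < (2 ^ m)%:R by rewrite ltr_nat ltn_expl.
rewrite exprVn natrX in h2 *; rewrite invf_plt ?posrE ?exprn_gt0 //.
exact: lt_trans h1 h2.
Qed.

Lemma pow_half_gt0 (R : realType) n : 0 < (2^-1 : R) ^+ n.
Proof. by rewrite exprn_gt0 // invr_gt0. Qed.

Lemma pow_half_bounded_eq0 (R : realType) (c : R) :
  0 <= c -> (forall n, c < (2^-1) ^+ n) -> c = 0.
Proof.
move=> hc hlt; apply/eqP; rewrite eq_le hc andbT leNgt; apply/negP => /pow_half_lt [n hn].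
by have := lt_trans (hlt n) hn; rewrite ltxx.
Qed.

Lemma pow_halfS_le (R : realType) n : (2^-1 : R) ^+ n.+1 <= (2^-1) ^+ n.
Proof. by rewrite exprS ler_piMl ?exprn_ge0 ?invr_ge0 // invf_le1 // ler1n. Qed.

Definition dyadic_cost (R : realType) (l : seq nat) : R := \sum_(k <- l) (2^-1) ^+ k.

Lemma dyadic_cost_ge0 (R : realType) l : 0 <= dyadic_cost R l.
Proof. by apply: sumr_ge0 => k _; apply/ltW/pow_half_gt0. Qed.

(* [dyadic_cost l * 2 ^ M] as a natural number (when every [k <= M]), so that
   divisibility arguments apply. *)
Definition dyadic_weight (M : nat) (l : seq nat) : nat := \sum_(k <- l) 2 ^ (M - k).

Lemma dyadic_weightE (R : realType) M l : all (fun k => k <= M)%N l ->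
  (dyadic_weight M l)%:R = dyadic_cost R l * 2 ^+ M.
Proof.
move=> hl; rewrite /dyadic_weight /dyadic_cost natr_sum mulr_suml big_seq [RHS]big_seq.
apply: eq_bigr => k /(allP hl) hk; rewrite natrX -{2}(subnK hk) exprD exprVn mulrA.
by rewrite [_^-1 * _]mulrC mulfVK // expf_neq0 // pnatr_eq0.
Qed.

Lemma dyadic_weight_cons M k l :
  dyadic_weight M (k :: l) = (2 ^ (M - k) + dyadic_weight M l)%N.
Proof. by rewrite /dyadic_weight big_cons. Qed.

Lemma dyadic_weight_perm M l1 l2 :
  perm_eq l1 l2 -> dyadic_weight M l1 = dyadic_weight M l2.
Proof. by move=> hp; apply: perm_big. Qed.

Lemma dyadic_weight_head_lt M n K r : r != [::] -> (K <= M)%N ->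
  (dyadic_weight M (K :: r) <= 2 ^ (M - n))%N -> (n < K)%N.
Proof.
case: r => // k r _ hKM; rewrite !dyadic_weight_cons => hw.
have : (2 ^ (M - K) < 2 ^ (M - n))%N by move: (expn_gt0 2 (M - k)); lia.
by rewrite ltn_exp2l //; lia.
Qed.

Lemma dyadic_weight_carry M K r : (K < M)%N ->
  dyadic_weight M (K :: r) = dyadic_weight M [:: K.+1, K.+1 & r].
Proof.
move=> hKM; rewrite !dyadic_weight_cons addnA addnn -mul2n -expnS.
by congr (2 ^ _ + _)%N; lia.
Qed.

(* Every weight occurring in [K.+1 :: r] except the first is a multiple of
   [2 ^ (M - K)], and so is the bound; hence the first one may be doubled. *)
Lemma dyadic_weight_round M n K r : (n <= K < M)%N -> all (fun k => k <= K)%N r ->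
  (dyadic_weight M (K.+1 :: r) <= 2 ^ (M - n))%N ->
  (dyadic_weight M (K :: r) <= 2 ^ (M - n))%N.
Proof.
move=> /andP [hnK hKM] hr; rewrite !dyadic_weight_cons.
have /dvdnP [x ->] : (2 ^ (M - K) %| dyadic_weight M r)%N.
  rewrite /dyadic_weight big_seq; apply: dvdn_sum => k /(allP hr) hk.
  by apply: dvdn_exp2l; lia.
have /dvdnP [y ->] : (2 ^ (M - K) %| 2 ^ (M - n))%N by apply: dvdn_exp2l; lia.
move=> hw; have : (x * 2 ^ (M - K) < y * 2 ^ (M - K))%N.
  by move: (expn_gt0 2 (M - K.+1)); lia.
by rewrite ltn_pmul2r ?expn_gt0 // => hxy; rewrite -mulSn leq_pmul2r ?expn_gt0.
Qed.

Lemma exists_seq_max (l : seq nat) : l != [::] ->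
  exists2 K, K \in l & all (fun k => k <= K)%N l.
Proof.
elim: l => [//|x l ih] _; have [->|/ih [K Kl lK]] := eqVneq l [::].
  by exists x; rewrite ?mem_head //= leqnn.
exists (maxn x K); first by rewrite /maxn; case: ltnP; rewrite ?mem_head ?in_cons ?Kl ?orbT.
rewrite /= leq_maxl; apply/allP => k /(allP lK) hk; exact: leq_trans hk (leq_maxr _ _).
Qed.

Section DyadicSums.
Variables (R : realType) (E : lmodType R) (W : nat -> set E).
Hypothesis W_normal : forall n a b, W n.+1 a -> W n.+1 b -> W n (a + b).
Hypothesis W0 : forall n, W n 0.

Lemma W_mono m n : (m <= n)%N -> W n `<=` W m.
Proof.
move=> /subnK <-; elim: (n - m)%N => [|k ih] z; first by rewrite add0n.
by rewrite addSn => /(W_normal (W0 _)); rewrite add0r; apply: ih.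
Qed.

Fixpoint dyadic_sum (l : seq nat) : set E :=
  if l is k :: l' then [set a + b | a in W k & b in dyadic_sum l'] else [set 0].

Lemma dyadic_sum_cat l1 l2 :
  dyadic_sum (l1 ++ l2) = [set a + b | a in dyadic_sum l1 & b in dyadic_sum l2].
Proof.
apply/seteqP; split; elim: l1 => [|k l1 ih] z /=.
- by move=> hz; exists 0 => //; exists z; rewrite ?add0r.
- move=> [a Wa [_ /ih [b hb [c hc <-]] <-]].
  by exists (a + b); [exists a => //; exists b | exists c; rewrite ?addrA].
- by move=> [_ -> [b hb <-]]; rewrite add0r.
- move=> [_ [a Wa [b hb <-]] [c hc <-]]; exists a => //.
  by exists (b + c); [apply: ih; exists b => //; exists c | rewrite addrA].
Qed.

Lemma dyadic_sum_perm l1 l2 : perm_eq l1 l2 -> dyadic_sum l1 `<=` dyadic_sum l2.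
Proof.
move=> hp z; apply: (catCA_perm_ind (P := fun l => dyadic_sum l z)) hp.
move=> s1 s2 s3; rewrite !dyadic_sum_cat => -[a ha [_ [b hb [c hc <-]] <-]].
by exists b => //; exists (a + c); [exists a => //; exists c | rewrite addrCA].
Qed.

Lemma dyadic_sum_carry k l : dyadic_sum [:: k.+1, k.+1 & l] `<=` dyadic_sum (k :: l).
Proof.
move=> _ [a Wa [_ [b Wb [c hc <-]] <-]].
by exists (a + b); [apply: W_normal | exists c; rewrite ?addrA].
Qed.

Lemma dyadic_sum_lower k l : dyadic_sum (k.+1 :: l) `<=` dyadic_sum (k :: l).
Proof. by move=> _ [a Wa [c hc <-]]; exists a; [apply: W_mono Wa | exists c]. Qed.


(* Induction on [\sum_(k <- l) 2 ^ k]: the largest index [K] of [l] is lowered by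
   one, merging two copies of it when [K] occurs twice. *)
Lemma dyadic_sum_sub M n l : (n <= M)%N -> all (fun k => k <= M)%N l ->
  (dyadic_weight M l <= 2 ^ (M - n))%N -> dyadic_sum l `<=` W n.
Proof.
move=> hn; have [b] := ubnP (\sum_(k <- l) 2 ^ k)%N; elim: b l => // b IH l hmu hall hw.
case: l hmu hall hw => [|k1 [|k2 r]] hmu hall hw.
- by move=> _ ->; apply: W0.
- move=> _ [a Wa [_ -> <-]]; rewrite addr0; apply: W_mono Wa => //.
  by move: hw hall; rewrite /dyadic_weight big_seq1 leq_exp2l //= andbT; lia.
set l := [:: k1, k2 & r] in hmu hall hw *.
have [K Kl lK] := exists_seq_max (l := l) isT.
have hlK := perm_to_rem Kl; set r' := rem K l in hlK.
have hKM : (K <= M)%N := allP hall K Kl.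
have hnK : (n < K)%N.
  apply: (dyadic_weight_head_lt (r := r')) hKM _; last by rewrite -(dyadic_weight_perm _ hlK).
  by rewrite -size_eq0 size_rem.
apply: subset_trans (dyadic_sum_perm hlK) _.
rewrite (dyadic_weight_perm _ hlK) in hw; rewrite (perm_big _ hlK) /= big_cons in hmu.
have lK' : all (fun k => k <= K)%N r' by rewrite (perm_all _ hlK) in lK; case/andP: lK.
clearbody r'; case: K Kl lK hlK hKM hnK lK' hw hmu => [//|K] _ _ _ hKM hnK lK' hw hmu.
have hall' : all (fun k => k <= M)%N (K :: r').
  by apply/allP => k /[!in_cons] /predU1P [->|/(allP lK')]; lia.
have [Kr|Kr] := boolP (K.+1 \in r'); last first.
  apply: subset_trans (dyadic_sum_lower (k := K) (l := r')) _.
  apply: (IH _ _ hall').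
    by rewrite big_cons; move: hmu (expn_gt0 2 K); rewrite expnS; lia.
  apply: dyadic_weight_round hw => //; first by rewrite -ltnS hnK.
  apply/allP => k hk; have := allP lK' k hk; rewrite leq_eqVlt => /predU1P [ek|//].
  by move: Kr; rewrite -ek hk.
have hrr := perm_to_rem Kr; set rr := rem K.+1 r' in hrr.
apply: subset_trans (dyadic_sum_perm (l2 := [:: K.+1, K.+1 & rr]) _) _.
  by rewrite perm_cons.
apply: subset_trans (dyadic_sum_carry (k := K) (l := rr)) (IH _ _ _ _).
- rewrite big_cons; move: hmu (expn_gt0 2 K); rewrite (perm_big _ hrr) /= !big_cons /=.
  by rewrite expnS; lia.
- by move: hall'; rewrite /= (perm_all _ hrr) /= => /and3P [-> _ ->].
- rewrite dyadic_weight_carry // (dyadic_weight_perm (l2 := K.+1 :: r') _) //.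
  by rewrite perm_cons perm_sym.
Qed.

Lemma dyadic_sum_sub_of_cost n l :
  dyadic_cost R l < (2^-1) ^+ n -> dyadic_sum l `<=` W n.
Proof.
move=> hcost; set M := (n + \sum_(k <- l) k)%N.
have hnM : (n <= M)%N by apply: leq_addr.
have hall : all (fun k => k <= M)%N l.
  by apply/allP => k hk; rewrite /M (big_rem k hk) /=; lia.
apply: (dyadic_sum_sub hnM hall); apply: ltnW; rewrite -(ltr_nat R) (dyadic_weightE R hall).
have -> : (2 ^ (M - n))%:R = dyadic_cost R [:: n] * 2 ^+ M.
  by rewrite -dyadic_weightE /= ?hnM // /dyadic_weight big_seq1.
by rewrite ltr_pM2r ?exprn_gt0 // /dyadic_cost big_seq1.
Qed.

End DyadicSums.

Section DyadicGauge.
Variables (R : realType) (E : lmodType R) (W : nat -> set E).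
Hypothesis W_top : forall z, W 0 z.
Hypothesis W_normal : forall n a b, W n.+1 a -> W n.+1 b -> W n (a + b).
Hypothesis W0 : forall n, W n 0.
Hypothesis W_balanced : forall n (c : R) z, `|c| <= 1 -> W n z -> W n (c *: z).

Definition dyadic_costs (z : E) : set R :=
  [set dyadic_cost R l | l in [set l | dyadic_sum W l z]].

Definition dyadic_gauge (z : E) : R := inf (dyadic_costs z).

Local Notation rho := dyadic_gauge.

Lemma dyadic_costs_ne z : nonempty (dyadic_costs z).
Proof.
by exists (dyadic_cost R [:: 0%N]), [:: 0%N] => //; exists z => //; exists 0; rewrite ?addr0.
Qed.

Lemma dyadic_costs_lb z : has_lbound (dyadic_costs z).
Proof. by exists 0 => _ [l _ <-]; apply: dyadic_cost_ge0. Qed.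

Lemma dyadic_gauge_le l z : dyadic_sum W l z -> rho z <= dyadic_cost R l.
Proof. by move=> hl; apply: ge_inf; [apply: dyadic_costs_lb | exists l]. Qed.

Lemma dyadic_gauge_ge0 z : 0 <= rho z.
Proof.
by apply: lb_le_inf; [apply: dyadic_costs_ne | move=> _ [l _ <-]; apply: dyadic_cost_ge0].
Qed.

Lemma dyadic_gauge0 : rho 0 = 0.
Proof.
apply/eqP; rewrite eq_le dyadic_gauge_ge0 andbT.
by have := @dyadic_gauge_le [::] 0 erefl; rewrite /dyadic_cost big_nil.
Qed.

Lemma dyadic_gauge_le_pow n z : W n z -> rho z <= (2^-1) ^+ n.
Proof.
move=> hz; have := @dyadic_gauge_le [:: n] z; rewrite /dyadic_cost big_seq1; apply.
by exists z => //; exists 0; rewrite ?addr0.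
Qed.

Lemma dyadic_gauge_lt_pow n z : rho z < (2^-1) ^+ n -> W n z.
Proof.
move=> hz; have hpos : 0 < (2^-1) ^+ n - rho z by rewrite subr_gt0.
have [_ [l hl <-]] := inf_adherent hpos (conj (dyadic_costs_ne z) (dyadic_costs_lb z)).
by rewrite addrC subrK => /dyadic_sum_sub_of_cost; apply.
Qed.

Lemma dyadic_gaugeD a b : rho (a + b) <= rho a + rho b.
Proof.
rewrite -lerBlDr; apply: lb_le_inf; first exact: dyadic_costs_ne.
move=> _ [la hla <-]; rewrite lerBlDr [X in _ <= X]addrC -lerBlDr.
apply: lb_le_inf; first exact: dyadic_costs_ne.
move=> _ [lb hlb <-]; rewrite lerBlDr /dyadic_cost -big_cat addrC.
by apply: dyadic_gauge_le; rewrite dyadic_sum_cat; exists b => //; exists a.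
Qed.

Lemma dyadic_sum_balanced (c : R) l z :
  `|c| <= 1 -> dyadic_sum W l z -> dyadic_sum W l (c *: z).
Proof.
move=> hc; elim: l z => [|k l ih] z /=; first by move=> ->; rewrite scaler0.
move=> [a Wa [b hb <-]]; rewrite scalerDr.
by exists (c *: a); [apply: W_balanced | exists (c *: b); [apply: ih |]].
Qed.

Lemma dyadic_gaugeZ_le1 (c : R) z : `|c| <= 1 -> rho (c *: z) <= rho z.
Proof.
move=> hc; apply: lb_le_inf; first exact: dyadic_costs_ne.
by move=> _ [l hl <-]; apply/dyadic_gauge_le/dyadic_sum_balanced.
Qed.

End DyadicGauge.

Definition metric_top (R : realType) (E : lmodType R) (G : set E) (d : E -> E -> R) :
    set (set E) :=
  [set U | U `<=` G /\ forall a, U a -> exists r, 0 < r /\ forall y, G y -> d a y < r -> U y].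

Lemma metric_top_topology (R : realType) (E : lmodType R) (G : set E) (d : E -> E -> R) :
  is_topology_on G (metric_top G d).
Proof.
split.
- by move=> U [].
- by split=> // a _; exists 1.
- move=> F hF; split=> [y [U FU Uy]|a [U FU Ua]]; first by case: (hF U FU) => + _; apply.
  have [_ /(_ a Ua) [r [hr h]]] := hF U FU.
  by exists r; split=> // y hy hd; exists U => //; apply: h.
- move=> U U' [hU1 hU2] [_ hU2']; split=> [y [/hU1 //]|a [Ua Ua']].
  have [r [hr h]] := hU2 a Ua; have [r' [hr' h']] := hU2' a Ua'.
  exists (Num.min r r'); split=> [|y hy]; first by rewrite lt_min hr hr'.
  by rewrite lt_min => /andP [h1 h2]; split; [apply: h | apply: h'].
Qed.

Lemma metric_top_ball (R : realType) (E : lmodType R) (G : set E) (d : E -> E -> R) a r :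
  is_metric_on G d -> G a -> metric_top G d [set y | G y /\ d a y < r].
Proof.
case=> _ _ _ htri ha; split=> [y []//|y [hy hr]].
exists (r - d a y); split=> [|z hz hlt]; first by rewrite subr_gt0.
by split=> //; apply: le_lt_trans (htri a y z ha hy hz) _; rewrite -ltrBrDl.
Qed.

Section FSeminormTopology.
Variables (R : realType) (E : lmodType R) (G : set E) (rho : E -> R).
Hypothesis G0 : G 0.
Hypothesis GD : forall a b, G a -> G b -> G (a + b).
Hypothesis GZ : forall (c : R) a, G a -> G (c *: a).
Hypothesis rho_ge0 : forall z, 0 <= rho z.
Hypothesis rho0 : rho 0 = 0.
Hypothesis rhoD : forall a b, rho (a + b) <= rho a + rho b.
Hypothesis rhoZ_le1 : forall (c : R) z, `|c| <= 1 -> rho (c *: z) <= rho z.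
Hypothesis rho_absorbing : forall z, G z -> forall e, 0 < e ->
  exists2 r, 0 < r & forall c : R, `|c| < r -> rho (c *: z) < e.
Hypothesis rho_definite : forall z, G z -> rho z = 0 -> z = 0.

Let dist a b := rho (a - b).
Let ball a r := [set y | G y /\ dist a y < r].

Lemma fseminormN z : rho (- z) = rho z.
Proof.
have h u : rho (- u) <= rho u by rewrite -scaleN1r; apply: rhoZ_le1; rewrite normrN normr1.
by apply/eqP; rewrite eq_le h /= -{1}[z]opprK h.
Qed.

Lemma fseminormMn z m : rho (z *+ m) <= m%:R * rho z.
Proof.
elim: m => [|m ih]; first by rewrite mulr0n rho0 mul0r.
by rewrite mulrS mulrSr mulrDl mul1r addrC; apply: le_trans (rhoD _ _) (lerD ih _).
Qed.

Lemma fseminormZ_le_nat (c : R) z (m : nat) : (0 < m)%N -> `|c| <= m%:R ->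
  rho (c *: z) <= m%:R * rho z.
Proof.
move=> hm hc; have hm' : (m%:R : R) != 0 by rewrite pnatr_eq0 -lt0n.
have -> : c *: z = ((c / m%:R) *: z) *+ m.
  by rewrite -scaler_nat scalerA mulrCA mulfV // mulr1.
apply: le_trans (fseminormMn _ _) _; rewrite ler_pM2l ?ltr0n //.
by apply: rhoZ_le1; rewrite normrM normfV normr_nat ler_pdivrMr ?ltr0n // mul1r.
Qed.

Lemma dist_triangle a b c : dist a c <= dist a b + dist b c.
Proof. by rewrite /dist; have := rhoD (a - b) (b - c); rewrite addrA subrK. Qed.

Lemma dist_sym a b : dist a b = dist b a.
Proof. by rewrite /dist -opprB fseminormN. Qed.

Lemma dist_refl a : dist a a = 0.
Proof. by rewrite /dist subrr rho0. Qed.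

Lemma dist_eq0 a b : G a -> G b -> dist a b = 0 -> a = b.
Proof.
move=> ha hb /rho_definite h; apply/eqP; rewrite -subr_eq0; apply/eqP/h.
by apply: GD ha _; rewrite -scaleN1r; apply: GZ.
Qed.

Lemma fseminorm_dist_metric : is_metric_on G dist.
Proof.
split=> [a b _ _|a b ha hb|a b _ _|a b c _ _ _].
- exact: rho_ge0.
- by split=> [|->]; [apply: dist_eq0 | apply: dist_refl].
- exact: dist_sym.
- exact: dist_triangle.
Qed.

Lemma ball_open a r : G a -> metric_top G dist (ball a r).
Proof. exact: metric_top_ball fseminorm_dist_metric. Qed.

Lemma ball_center a r : G a -> 0 < r -> ball a r a.
Proof. by move=> ha hr; split=> //; rewrite dist_refl. Qed.

Lemma fseminorm_ball0_open r : metric_top G dist [set y | G y /\ rho y < r].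
Proof.
have [_ h] := ball_open r G0; split=> [y []//|y [hy hr]].
have [|e [he he']] := h y; first by rewrite /ball /dist /= sub0r fseminormN.
by exists e; split=> // z hz /(he' z hz) [_]; rewrite /dist sub0r fseminormN.
Qed.

Lemma fseminorm_hausdorff a b : G a -> G b -> a <> b ->
  exists U V, [/\ metric_top G dist U, metric_top G dist V, U a, V b & U `&` V = set0].
Proof.
move=> ha hb hab; have hpos : 0 < dist a b / 2.
  rewrite divr_gt0 // lt_neqAle rho_ge0 andbT eq_sym.
  by apply/eqP => /(dist_eq0 ha hb).
exists (ball a (dist a b / 2)), (ball b (dist a b / 2)).
split; try exact: ball_open; try exact: ball_center.
apply/seteqP; split=> // z [[_ h1] [_ h2]].
by have := dist_triangle a z b; rewrite [dist z b]dist_sym; lra.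
Qed.

Lemma fseminorm_continuous_add a b U : G a -> G b -> metric_top G dist U -> U (a + b) ->
  exists V W, [/\ metric_top G dist V, metric_top G dist W, V a, W b &
    forall v w, V v -> W w -> U (v + w)].
Proof.
move=> ha hb [_ hU] hUab; have [r [hr h]] := hU _ hUab.
have hr2 : 0 < r / 2 by rewrite divr_gt0.
exists (ball a (r / 2)), (ball b (r / 2)).
split; try exact: ball_open; try exact: ball_center.
move=> v w [hv hdv] [hw hdw]; apply: h; first exact: GD.
have := rhoD (a - v) (b - w); rewrite addrACA -opprD -/(dist _ _) -!/(dist _ _); lra.
Qed.

Lemma fseminorm_continuous_scale (a : R) y U : G y -> metric_top G dist U -> U (a *: y) ->
  exists e V, [/\ 0 < e, metric_top G dist V, V y &
    forall (b : R) v, `|b - a| < e -> V v -> U (b *: v)].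
Proof.
move=> hy [_ hU] hUa; have [r [hr h]] := hU _ hUa.
have [e0 he0 habs] := rho_absorbing hy (divr_gt0 hr (ltr0n R 2)).
set m := (Num.bound `|a|).+1.
have ham : `|a| <= m%:R.
  by apply: ltW; apply: lt_le_trans (archi_boundP (normr_ge0 a)) _; rewrite ler_nat.
have hM : 0 < m%:R + 1 :> R by rewrite ltr_wpDl.
exists (Num.min e0 1), (ball y (r / (2 * (m%:R + 1)))).
split; first by rewrite lt_min he0 ltr01.
- exact: ball_open.
- by apply: ball_center => //; rewrite divr_gt0 // mulr_gt0.
move=> b v; rewrite lt_min => /andP [hb0 hb1] [hv hdv]; apply: h; first exact: GZ.
rewrite /dist; have -> : a *: y - b *: v = a *: (y - v) + ((a - b) *: y + (b - a) *: (y - v)).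
  rewrite [(b - a) *: _](_ : _ = - ((a - b) *: (y - v))); last by rewrite -scaleNr opprB.
  rewrite -scalerBr (_ : y - (y - v) = v); last by rewrite opprB addrC subrK.
  by rewrite scalerBl scalerBr addrA subrK.
have h1 : rho (a *: (y - v)) <= m%:R * rho (y - v) by apply: fseminormZ_le_nat.
have h2 : rho ((a - b) *: y) < r / 2 by apply: habs; rewrite distrC.
have h3 : rho ((b - a) *: (y - v)) <= rho (y - v) by apply/rhoZ_le1/ltW.
have h4 := rhoD (a *: (y - v)) ((a - b) *: y + (b - a) *: (y - v)).
have h5 := rhoD ((a - b) *: y) ((b - a) *: (y - v)).
have h6 : rho (y - v) * (2 * (m%:R + 1)) < r by rewrite -ltr_pdivlMr // mulr_gt0.
have h7 := rho_ge0 (y - v).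
nra.
Qed.

Lemma fseminorm_linear_topology : linear_topology_on G (metric_top G dist).
Proof.
split; [exact: metric_top_topology | exact: fseminorm_continuous_add |
  exact: fseminorm_continuous_scale | exact: fseminorm_hausdorff].
Qed.

Lemma fseminorm_metrisable : metrisable_on G (metric_top G dist).
Proof.
by exists dist; split=> //; apply: fseminorm_dist_metric.
Qed.

End FSeminormTopology.

Lemma nbhd0_has0 (R : realType) (E : lmodType R) (T : set (set E)) (U : set E) :
  nbhd0 T U -> U 0.
Proof. by case=> V [_ V0 /(_ 0 V0)]. Qed.

Section CarrierSubmetrisable.
Variables (R : realType) (E : lmodType R) (le : E -> E -> Prop).
Hypothesis hVL : is_vector_lattice le.
Variable tau : set (set E).
Hypothesis htau : locally_solid_on le setT tau.
Variable V : nat -> set E.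
Hypothesis V_normal : normal_seq tau V.
Hypothesis V_solid : forall n, solid_in le setT (V n).
Variable x : E.
Hypothesis x_disj : disj_compl le (\bigcap_n V n) x.

Let B := band_gen le x.
(* Prepending the whole space makes every vector a finite dyadic sum. *)
Let W n := if n is n'.+1 then V n' else setT.
Let rho := dyadic_gauge W.

Let W_top z : W 0 z. Proof. by []. Qed.

Let W_normal n a b : W n.+1 a -> W n.+1 b -> W n (a + b).
Proof. by case: n => [//|n]; apply: (proj2 V_normal). Qed.

Let W0 n : W n 0.
Proof. by case: n => [//|n]; apply: nbhd0_has0 (proj1 V_normal n). Qed.

Let W_balanced n (c : R) z : `|c| <= 1 -> W n z -> W n (c *: z).
Proof.
case: n => [//|n] /= hc hz; case: (V_solid n) => _ hs.
exact: hs hz I (vabsZ_le1 hVL _ hc).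
Qed.

Let rho_ge0 z : 0 <= rho z. Proof. exact: dyadic_gauge_ge0. Qed.
Let rho0 : rho 0 = 0. Proof. exact: dyadic_gauge0. Qed.
Let rhoD a b : rho (a + b) <= rho a + rho b. Proof. exact: dyadic_gaugeD. Qed.
Let rhoZ_le1 (c : R) z : `|c| <= 1 -> rho (c *: z) <= rho z.
Proof. exact: dyadic_gaugeZ_le1. Qed.

Let rho_le_V n z : V n z -> rho z <= (2^-1) ^+ n.+1.
Proof. exact: (dyadic_gauge_le_pow (n := n.+1)). Qed.

Let rho_lt_V n z : rho z < (2^-1) ^+ n.+1 -> V n z.
Proof. exact: (dyadic_gauge_lt_pow W_top W_normal W0 (n := n.+1)). Qed.

Let rho_absorbing z : B z -> forall e, 0 < e ->
  exists2 r, 0 < r & forall c : R, `|c| < r -> rho (c *: z) < e.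
Proof.
move=> _ e he; have [n hn] := pow_half_lt he.
have [O [tO O0 OV]] := proj1 V_normal n.
case: htau => -[_ _ hscale _] _.
have O0z : O (0 *: z) by rewrite scale0r.
have [r [U [hr _ Uz hU]]] := hscale 0 z O I tO O0z.
exists r => // c hc; apply: le_lt_trans (rho_le_V (OV _ (hU c z _ Uz))) _.
  by rewrite subr0.
exact: le_lt_trans (pow_halfS_le R n) hn.
Qed.

Let rho_definite z : B z -> rho z = 0 -> z = 0.
Proof.
move=> Bz rz0; have Nz : (\bigcap_n V n) z.
  by move=> n _; apply: rho_lt_V; rewrite rz0 pow_half_gt0.
have := band_gen_sub (disj_compl_band hVL _) x_disj Bz z Nz.
move=> hzz; apply: (vabs_le0 hVL); rewrite -hzz.
by apply: (meet_glb hVL); apply: (vle_refl hVL).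
Qed.

Let BD := @band_genD _ _ le x.
Let BZ := @band_genZ _ _ le x.

Let T := metric_top B (fun a b => rho (a - b)).

Lemma gauge_top_locally_solid : locally_solid_on le B T.
Proof.
split; first exact: fseminorm_linear_topology BD BZ rho_ge0 rho0 rhoD rhoZ_le1
  rho_absorbing rho_definite.
move=> U [O [[_ hO] O0 OU]]; have [r [hr hOr]] := hO 0 O0.
have [n hn] := pow_half_lt hr.
exists (V n `&` B); split.
- exists [set y | B y /\ rho y < (2^-1) ^+ n.+1]; split.
  + exact: fseminorm_ball0_open (@band_gen0 _ _ le x) BD BZ rho_ge0 rho0 rhoD rhoZ_le1
      rho_definite _.
  + by split; [apply: band_gen0 | rewrite rho0 pow_half_gt0].
  + by move=> y [By /rho_lt_V].
- split=> [y []//|a b [Vb Bb] Ba hab]; split=> //.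
  by case: (V_solid n) => _ hs; apply: hs Vb I hab.
- move=> y [Vy By]; apply/OU/hOr => //; rewrite sub0r fseminormN //.
  apply: le_lt_trans (rho_le_V Vy) _; exact: le_lt_trans (pow_halfS_le R n) hn.
Qed.

Lemma gauge_top_coarser : finer (restrict_top B tau) T.
Proof.
move=> U [UB hU]; case: htau => -[[_ _ hunion _] hadd _ _] _.
exists (\bigcup_(O in [set O | tau O /\ O `&` B `<=` U]) O); split.
  by apply: hunion => O [].
apply/seteqP; split=> [u Uu|y [[O [_ OBU] Oy] By]]; last exact: OBU.
split; last exact: UB.
have [r [hr hUr]] := hU u Uu; have [n hn] := pow_half_lt hr.
have [O [tO O0 OV]] := proj1 V_normal n.
have Ouu : O (u - u) by rewrite subrr.
have [O1 [O2 [tO1 _ O1u O2u hO12]]] := hadd u (- u) O I I tO Ouu.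
exists O1 => //; split=> // o [O1o Bo]; apply: hUr => //.
have hV : V n (o - u) by apply/OV/hO12.
rewrite -opprB fseminormN //; apply: le_lt_trans (rho_le_V hV) _.
exact: le_lt_trans (pow_halfS_le R n) hn.
Qed.

Lemma band_gen_solidly_submetrisable :
  solidly_submetrisable_on le (band_gen le x) (restrict_top (band_gen le x) tau).
Proof.
exists T; split; [exact: gauge_top_locally_solid | | exact: gauge_top_coarser].
exact: fseminorm_metrisable BD BZ rho_ge0 rho0 rhoD rhoZ_le1 rho_definite.
Qed.

End CarrierSubmetrisable.

Section SubmetrisableCarrier.
Variables (R : realType) (E : lmodType R) (le : E -> E -> Prop).
Hypothesis hVL : is_vector_lattice le.
Variable tau : set (set E).
Hypothesis htau : locally_solid_on le setT tau.

Lemma nbhd0_half_solid S U : nbhd0 tau S -> nbhd0 tau U ->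
  exists S', [/\ nbhd0 tau S', solid_in le setT S', S' `<=` U &
    forall a b, S' a -> S' b -> S (a + b)].
Proof.
move=> [O [tO O0 OS]] [O' [tO' O'0 O'U]].
case: htau => -[[_ _ _ hcap] hadd _ _] hsolid.
have O00 : O (0 + 0) by rewrite addr0.
have [O1 [O2 [tO1 tO2 O10 O20 hO12]]] := hadd 0 0 O I I tO O00.
have tO12 : tau (O1 `&` O2 `&` O') by apply: (hcap) => //; apply: hcap.
have [|S' [hS' sS' S'O]] := hsolid (O1 `&` O2 `&` O').
  by exists (O1 `&` O2 `&` O'); split.
exists S'; split=> // [y /S'O [_ /O'U] //|a b /S'O [[O1a _] _] /S'O [[_ O2b] _]].
by apply: OS; apply: hO12.
Qed.

Lemma exists_normal_solid_seq (U : nat -> set E) : (forall n, nbhd0 tau (U n)) ->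
  exists V, [/\ normal_seq tau V, forall n, solid_in le setT (V n) & forall n, V n `<=` U n].
Proof.
move=> hU; have step (p : set E * nat) : exists S', nbhd0 tau p.1 ->
    [/\ nbhd0 tau S', solid_in le setT S', S' `<=` U p.2 &
      forall a b, S' a -> S' b -> p.1 (a + b)].
  have [hS|nS] := pselect (nbhd0 tau p.1); last by exists setT => /nS.
  by have [S' hS'] := nbhd0_half_solid hS (hU p.2); exists S'.
have [f hf] := choice step.
pose V := fix V n := if n is n'.+1 then f (V n', n) else f (setT, 0%N).
have hT : nbhd0 tau setT by case: htau => -[[_ tT _ _] _ _ _] _; exists setT.
have hV n : [/\ nbhd0 tau (V n), solid_in le setT (V n), V n `<=` U n &
    forall a b, V n.+1 a -> V n.+1 b -> V n (a + b)].
  suff hV0 m : [/\ nbhd0 tau (V m), solid_in le setT (V m) & V m `<=` U m].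
    by case: (hV0 n) => hn hs hs'; split=> //; case: (hf (V n, n.+1) hn).
  by elim: m => [|m [ih _ _]]; [case: (hf (setT, 0%N) hT) | case: (hf (V m, m.+1) ih)].
by exists V; split=> [|n|n]; [split=> n; case: (hV n) | case: (hV n) | case: (hV n)].
Qed.

Lemma solidly_submetrisable_carrier x :
  solidly_submetrisable_on le (band_gen le x) (restrict_top (band_gen le x) tau) ->
  carrier le tau x.
Proof.
set B := band_gen le x; case=> T' [_ [d [hd hT']] hfin].
have B0 : B 0 := @band_gen0 _ _ le x.
have ball_restrict n : exists U, tau U /\ [set y | B y /\ d 0 y < (2^-1) ^+ n] = U `&` B.
  by apply: hfin; apply/hT'; exact: metric_top_ball.
have [U hU] := choice ball_restrict.
have hd0 : d 0 0 = 0 by case: hd => _ h _ _; apply/h.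
have U0 n : U n 0.
  have [_ /seteqP [hsub _]] := hU n.
  have : [set y | B y /\ d 0 y < (2^-1) ^+ n] 0 by split=> //; rewrite hd0 pow_half_gt0.
  by move/hsub => [].
have nbU n : nbhd0 tau (U n) by exists (U n); split=> //; case: (hU n).
have [V [hVn hVs hVU]] := exists_normal_solid_seq nbU.
exists V; split=> // y Ny.
set z := vmeet le (vabs le x) (vabs le y).
have hz : le (vabs le z) z.
  by apply: (vabs_le_id hVL); apply: (meet_glb hVL); apply: (vabs_ge0 hVL).
have Bz : B z.
  by apply: band_gen_solid (@band_gen_id _ _ le x) (vle_trans hVL hz (meet_lbl hVL _ _)).
have Vz n : V n z.
  by case: (hVs n) => _ hs; apply: hs (Ny n I) I (vle_trans hVL hz (meet_lbr hVL _ _)).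
have dz n : d 0 z < (2^-1) ^+ n.
  by case: (hU n) => _ /seteqP [_ /(_ z) []] //; split=> //; apply: hVU.
case: hd => hge0 /(_ 0 z B0 Bz) [h _] _ _.
by apply/esym/h/pow_half_bounded_eq0 => //; apply: hge0.
Qed.

End SubmetrisableCarrier.

Theorem proposition3p7 (R : realType) (E : lmodType R) (le : E -> E -> Prop)
  (hVL : is_vector_lattice le) (hArch : is_archimedean le)
  (tau : set (set E)) (htau : locally_solid_on le setT tau) :
  locally_solidly_submetrisable le tau <-> carrier le tau = setT.
Proof.
split=> [hL | hC x].
  by apply/seteqP; split=> // x _; apply: solidly_submetrisable_carrier.
have : carrier le tau x by rewrite hC.
case=> V [hV hVs hx]; exact (band_gen_solidly_submetrisable hVL htau hV hVs hx).
Qed.
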